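(* Let $U\subset\mathbb{R}^n$ be a bounded domain and let $V$ be an open set with $\overline V\subset U$. Let $(u_1,u_2)$ be a viscosity supersolution of the system (S) in $U$. Assume there is $x_0\in\partial V$ such that $u_1(x_0)\le u_i(x)$ for all $x\in U$ and $i=1,2$ (i.e. $u_1(x_0)=\min_{i=1,2}\min_{U}u_i$), and $u_1(x_0)<u_i(x)$ for all $x\in V$ and $i=1,2$. Assume further that $V$ satisfies the interior ball condition at $x_0$: there is an open ball $B=B(\bar x,R)\subset V$ with $x_0\in\partial B$. Let $\nu(x_0)=(x_0-\bar x)/|x_0-\bar x|$ be the outward unit normal at $x_0$. Then $$\liminf_{s\to0^+}\frac{u_1(x_0-s\nu(x_0))-u_1(x_0)}{s}>0.$$
   Context: For $\varphi\in C^2$ near $x$, set $\Delta_\infty\varphi(x)=|D\varphi(x)|^{-2}\sum_{k,l=1}^n\varphi_{x_k}\varphi_{x_l}\varphi_{x_kx_l}(x)$ when $D\varphi(x)\neq0$. Define $\Delta_\infty^+\varphi(x)=\Delta_\infty\varphi(x)$ if $D\varphi(x)\ne0$ and $\Delta_\infty^+\varphi(x)=\max\{D^2\varphi(x)v\cdot v: v\in\mathbb{S}^{n-1}\}$ if $D\varphi(x)=0$; define $\Delta_\infty^-\varphi(x)$ in the same way with $\min$ in place of $\max$. The system (S) on an open set $\Omega$ is: $-\Delta_\infty u_1+u_1-u_2=0$ and $-\Delta_\infty u_2+u_2-u_1=0$ in $\Omega$. A pair $(u_1,u_2)$ of upper semicontinuous functions on $\Omega$ is a viscosity subsolution of (S)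 in $\Omega$ if for each $i\in\{1,2\}$, $j=3-i$, and each $\varphi\in C^2(\Omega)$ such that $u_i-\varphi$ has a local maximum at $x_0\in\Omega$, one has $-\Delta_\infty^+\varphi(x_0)+u_i(x_0)-u_j(x_0)\le0$. A pair of lower semicontinuous functions on $\Omega$ is a viscosity supersolution if for each $i$, $j=3-i$, and each $\varphi\in C^2(\Omega)$ such that $u_i-\varphi$ has a local minimum at $x_0\in\Omega$, one has $-\Delta_\infty^-\varphi(x_0)+u_i(x_0)-u_j(x_0)\ge0$. A viscosity solution is a pair that is both a subsolution and a supersolution. *)

From Stdlib Require Import Reals Lra.
From Stdlib Require Fin.
Open Scope R_scope.

Definition vec (n : nat) := Fin.t n -> R.

Fixpoint fsum (n : nat) : (Fin.t n -> R) -> R :=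
  match n with
  | O => fun _ => 0
  | S m => fun f => f Fin.F1 + fsum m (fun i => f (Fin.FS i))
  end.

Definition dot {n} (x y : vec n) : R := fsum n (fun k => x k * y k).
Definition vnorm {n} (x : vec n) : R := sqrt (dot x x).
Definition vsub {n} (x y : vec n) : vec n := fun k => x k - y k.
Definition vscale {n} (a : R) (x : vec n) : vec n := fun k => a * x k.
Definition rn_dist {n} (x y : vec n) : R := vnorm (vsub x y).

Definition rn_is_open {n} (S : vec n -> Prop) : Prop :=
  forall x, S x -> exists r, r > 0 /\ forall y, rn_dist y x < r -> S y.
Definition rn_closure {n} (S : vec n -> Prop) (x : vec n) : Prop :=
  forall eps, eps > 0 -> exists y, S y /\ rn_dist y x < eps.
Definition rn_boundary {n} (S : vec n -> Prop) (x : vec n) : Prop :=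
  rn_closure S x /\ ~ S x.
Definition rn_bounded {n} (S : vec n -> Prop) : Prop :=
  exists M, forall x, S x -> vnorm x <= M.
Definition rn_connected {n} (S : vec n -> Prop) : Prop :=
  ~ exists A B : vec n -> Prop,
      rn_is_open A /\ rn_is_open B /\
      (forall x, S x -> A x \/ B x) /\
      (forall x, S x -> A x -> B x -> False) /\
      (exists x, S x /\ A x) /\ (exists x, S x /\ B x).
Definition rn_domain {n} (S : vec n -> Prop) : Prop :=
  rn_is_open S /\ rn_connected S /\ exists x, S x.
Definition rn_open_ball {n} (c : vec n) (r : R) (y : vec n) : Prop := rn_dist y c < r.

Definition has_grad {n} (f : vec n -> R) (g : vec n) (x : vec n) : Prop :=
  forall eps, eps > 0 -> exists delta, delta > 0 /\
    forall y, rn_dist y x < delta ->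
      Rabs (f y - f x - dot g (vsub y x)) <= eps * rn_dist y x.

Definition continuous_on {n} (S : vec n -> Prop) (f : vec n -> R) : Prop :=
  forall x, S x -> forall eps, eps > 0 -> exists delta, delta > 0 /\
    forall y, S y -> rn_dist y x < delta -> Rabs (f y - f x) < eps.

Definition C2_on {n} (Om : vec n -> Prop) (phi : vec n -> R)
  (Dphi : vec n -> vec n) (D2phi : vec n -> Fin.t n -> Fin.t n -> R) : Prop :=
  (forall x, Om x -> has_grad phi (Dphi x) x) /\
  (forall x k, Om x -> has_grad (fun y => Dphi y k) (D2phi x k) x) /\
  (forall k l, continuous_on Om (fun y => D2phi y k l)).

Definition quad {n} (H : Fin.t n -> Fin.t n -> R) (v : vec n) : R :=
  dot (fun k => dot (H k) v) v.

(* m = Delta_infty^- phi(x), given gradient p = Dphi(x) and Hessian H = D2phi(x) *)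
Definition lap_inf_minus {n} (p : vec n) (H : Fin.t n -> Fin.t n -> R) (m : R) : Prop :=
  (p <> (fun _ => 0) /\
     m = / (vnorm p ^ 2) * fsum n (fun k => fsum n (fun l => p k * p l * H k l))) \/
  (p = (fun _ => 0) /\
     (exists v, vnorm v = 1 /\ quad H v = m) /\
     (forall v, vnorm v = 1 -> m <= quad H v)).

Definition lsc_on {n} (Om : vec n -> Prop) (u : vec n -> R) : Prop :=
  forall x, Om x -> forall eps, eps > 0 -> exists delta, delta > 0 /\
    forall y, Om y -> rn_dist y x < delta -> u y > u x - eps.

Definition local_min_at {n} (Om : vec n -> Prop) (f : vec n -> R) (x0 : vec n) : Prop :=
  exists r, r > 0 /\ forall y, Om y -> rn_dist y x0 < r -> f x0 <= f y.

(* supersolution condition for the i-th equation, ui the i-th, uj the other unknown *)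
Definition super_cond {n} (Om : vec n -> Prop) (ui uj : vec n -> R) : Prop :=
  forall phi Dphi D2phi x0, C2_on Om phi Dphi D2phi -> Om x0 ->
    local_min_at Om (fun x => ui x - phi x) x0 ->
    forall m, lap_inf_minus (Dphi x0) (D2phi x0) m ->
      - m + ui x0 - uj x0 >= 0.

Definition viscosity_supersolution {n} (Om : vec n -> Prop) (u1 u2 : vec n -> R) : Prop :=
  lsc_on Om u1 /\ lsc_on Om u2 /\ super_cond Om u1 u2 /\ super_cond Om u2 u1.

(* liminf_{s -> 0+} q(s) > a  (liminf taken in the extended reals) *)
Definition liminf_0plus_gt (q : R -> R) (a : R) : Prop :=
  exists c delta, c > a /\ delta > 0 /\ forall s, 0 < s < delta -> c <= q s.

From Stdlib Require Import Reals Lra Psatz Rtopology ClassicalEpsilon Classical.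
Open Scope R_scope.

(* Write T(x) = |x - xbar|^2 and m = u1(x0). On the closed ball {T <= 3R^2/4}, which lies in V,
   the lower semicontinuous function min(u1,u2) attains its minimum m + delta > m. The radial
   barrier w = A + eps (T - 2R^2)^2, tuned so that w = m on the sphere {T = R^2} and w = m + delta
   on {T = 3R^2/4}, satisfies Delta_infty w = 4 eps (3T - 2R^2) > 0 in the annulus between them.
   A negative minimum of min(u1,u2) - w over the annulus would be interior, and there the
   component u_i realizing min(u1,u2) is touched from below by w while u_i - u_j <= 0,
   contradicting the supersolution inequality. Hence u1 >= w on the annulus, and w grows
   linearly along the inner normal: w(x0 - s nu) - m >= 2 eps R^3 s for small s > 0. *)


Lemma fsum_ext n (f g : Fin.t n -> R) : (forall k, f k = g k) -> fsum n f = fsum n g.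
Proof.
  revert f g; induction n as [|n IH]; intros f g H; simpl; [reflexivity|].
  now rewrite H, (IH (fun i => f (Fin.FS i)) (fun i => g (Fin.FS i))).
Qed.

Lemma fsum_plus n (f g : Fin.t n -> R) : fsum n (fun k => f k + g k) = fsum n f + fsum n g.
Proof.
  revert f g; induction n as [|n IH]; intros f g; simpl; [lra|].
  rewrite (IH (fun i => f (Fin.FS i)) (fun i => g (Fin.FS i))); lra.
Qed.

Lemma fsum_scal n c (f : Fin.t n -> R) : fsum n (fun k => c * f k) = c * fsum n f.
Proof.
  revert f; induction n as [|n IH]; intros f; simpl; [lra|].
  rewrite (IH (fun i => f (Fin.FS i))); lra.
Qed.

Lemma fsum_nonneg n (f : Fin.t n -> R) : (forall k, 0 <= f k) -> 0 <= fsum n f.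
Proof.
  revert f; induction n as [|n IH]; intros f H; simpl; [lra|].
  specialize (IH (fun i => f (Fin.FS i)) (fun i => H _)). specialize (H Fin.F1). lra.
Qed.

Lemma fsum_ge_term n (f : Fin.t n -> R) k : (forall k, 0 <= f k) -> f k <= fsum n f.
Proof.
  revert f; induction k as [m|m k IH]; intros f H; simpl.
  - pose proof (fsum_nonneg _ (fun i => f (Fin.FS i)) (fun i => H _)). lra.
  - specialize (IH (fun i => f (Fin.FS i)) (fun i => H _)). specialize (H Fin.F1). lra.
Qed.

Definition kron {n} (k l : Fin.t n) : R := if Fin.eq_dec k l then 1 else 0.

Lemma fsum_kron n (k : Fin.t n) (g : Fin.t n -> R) : fsum n (fun l => kron k l * g l) = g k.
Proof.
  revert g; induction k as [m|m k IH]; intros g; simpl; unfold kron at 1.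
  - destruct (Fin.eq_dec Fin.F1 Fin.F1) as [_|C]; [|congruence].
    rewrite (fsum_ext _ _ (fun i => 0 * g (Fin.FS i))), fsum_scal; [lra|].
    intro i. unfold kron. now destruct (Fin.eq_dec Fin.F1 (Fin.FS i)).
  - destruct (Fin.eq_dec (Fin.FS k) Fin.F1) as [E|_]; [discriminate E|].
    rewrite <- (IH (fun i => g (Fin.FS i))), Rmult_0_l, Rplus_0_l.
    apply fsum_ext. intro i. unfold kron.
    destruct (Fin.eq_dec (Fin.FS k) (Fin.FS i)) as [E|E], (Fin.eq_dec k i) as [E'|E'];
      try reflexivity.
    + apply Fin.FS_inj in E. congruence.
    + subst. congruence.
Qed.

Lemma dot_nonneg n (x : vec n) : 0 <= dot x x.
Proof. apply fsum_nonneg. intro k. apply Rle_0_sqr. Qed.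

Lemma dot_comm n (x y : vec n) : dot x y = dot y x.
Proof. apply fsum_ext. intro; ring. Qed.

Lemma dot_ext n (x x' y y' : vec n) :
  (forall k, x k = x' k) -> (forall k, y k = y' k) -> dot x y = dot x' y'.
Proof. intros Hx Hy. apply fsum_ext. intro k. now rewrite Hx, Hy. Qed.

Lemma dot_plus_l n (x y z : vec n) : dot (fun k => x k + y k) z = dot x z + dot y z.
Proof. unfold dot. rewrite <- fsum_plus. apply fsum_ext; intro; ring. Qed.

Lemma dot_scal_l n c (x z : vec n) : dot (fun k => c * x k) z = c * dot x z.
Proof. unfold dot. rewrite <- fsum_scal. apply fsum_ext; intro; ring. Qed.

Lemma dot_kron_l n (k : Fin.t n) (h : vec n) : dot (kron k) h = h k.
Proof. apply fsum_kron. Qed.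

Lemma dot_expand n a b (x y : vec n) :
  dot (fun k => a * x k + b * y k) (fun k => a * x k + b * y k)
  = a * a * dot x x + 2 * a * b * dot x y + b * b * dot y y.
Proof. unfold dot. rewrite <- !fsum_scal, <- !fsum_plus. apply fsum_ext; intro; ring. Qed.

Lemma Cauchy_Schwarz_sq n (x y : vec n) : dot x y * dot x y <= dot x x * dot y y.
Proof.
  pose proof (dot_nonneg _ x) as Hxx. pose proof (dot_nonneg _ y) as Hyy.
  destruct (Req_dec (dot y y) 0) as [Hy|Hy].
  - destruct (Req_dec (dot x y) 0) as [Hxy|Hxy]; [rewrite Hxy; nra|].
    (* a vector [x + t y] of negative square norm for a suitable [t] *)
    pose proof (dot_nonneg _ (fun k => 1 * x k + (- (dot x x + 1) / (2 * dot x y)) * y k)) as H.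
    rewrite dot_expand, Hy in H.
    assert (2 * 1 * (- (dot x x + 1) / (2 * dot x y)) * dot x y = - (dot x x + 1))
      by (field; auto).
    nra.
  - pose proof (dot_nonneg _ (fun k => dot y y * x k + (- dot x y) * y k)) as H.
    rewrite dot_expand in H. nra.
Qed.

Lemma vnorm_nonneg n (x : vec n) : 0 <= vnorm x.
Proof. apply sqrt_pos. Qed.

Lemma vnorm_sq n (x : vec n) : vnorm x * vnorm x = dot x x.
Proof. apply sqrt_sqrt, dot_nonneg. Qed.

Lemma vnorm_ext n (x y : vec n) : (forall k, x k = y k) -> vnorm x = vnorm y.
Proof. intro H. unfold vnorm. f_equal. now apply dot_ext. Qed.

Lemma vnorm_lt n (x : vec n) r : 0 < r -> dot x x < r * r -> vnorm x < r.
Proof. intros Hr H. pose proof (vnorm_nonneg _ x). rewrite <- vnorm_sq in H. nra. Qed.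

Lemma vnorm_le n (x : vec n) r : 0 <= r -> dot x x <= r * r -> vnorm x <= r.
Proof. intros Hr H. pose proof (vnorm_nonneg _ x). rewrite <- vnorm_sq in H. nra. Qed.

Lemma Cauchy_Schwarz n (x y : vec n) : Rabs (dot x y) <= vnorm x * vnorm y.
Proof.
  pose proof (Cauchy_Schwarz_sq _ x y) as H.
  rewrite <- (vnorm_sq _ x), <- (vnorm_sq _ y) in H.
  pose proof (vnorm_nonneg _ x). pose proof (vnorm_nonneg _ y).
  rewrite <- (Rabs_right (vnorm x * vnorm y)) by nra.
  apply Rsqr_le_abs_0. unfold Rsqr. nra.
Qed.

Lemma Rabs_coord_le_vnorm n (x : vec n) k : Rabs (x k) <= vnorm x.
Proof.
  assert (H : x k * x k <= dot x x)
    by (apply (fsum_ge_term _ (fun k => x k * x k)); intro; apply Rle_0_sqr).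
  rewrite <- vnorm_sq in H. pose proof (vnorm_nonneg _ x).
  rewrite <- (Rabs_right (vnorm x)) by lra.
  apply Rsqr_le_abs_0. unfold Rsqr. nra.
Qed.

Lemma vnorm_triang n (x y : vec n) : vnorm (fun k => x k + y k) <= vnorm x + vnorm y.
Proof.
  pose proof (vnorm_nonneg _ x). pose proof (vnorm_nonneg _ y).
  apply vnorm_le; [lra|].
  rewrite (dot_ext _ _ (fun k => 1 * x k + 1 * y k) _ (fun k => 1 * x k + 1 * y k))
    by (intro; ring).
  rewrite dot_expand, <- !vnorm_sq.
  pose proof (Cauchy_Schwarz _ x y). pose proof (Rle_abs (dot x y)). nra.
Qed.

Lemma rn_dist_sym n (x y : vec n) : rn_dist x y = rn_dist y x.
Proof. unfold rn_dist, vnorm. f_equal. apply fsum_ext; intro; unfold vsub; ring. Qed.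

Lemma rn_dist_triang n (x y z : vec n) : rn_dist x z <= rn_dist x y + rn_dist y z.
Proof.
  unfold rn_dist. rewrite <- (vnorm_triang n (vsub x y) (vsub y z)).
  right. unfold vnorm. f_equal. apply dot_ext; intro; unfold vsub; ring.
Qed.

Definition strictly_incr (phi : nat -> nat) : Prop := forall j, (phi j < phi (S j))%nat.

Lemma strictly_incr_lt phi : strictly_incr phi -> forall a b, (a < b)%nat -> (phi a < phi b)%nat.
Proof. intros H a b Hab. induction Hab as [|b _ IH]; [apply H|]. specialize (H b). lia. Qed.

Lemma strictly_incr_ge phi : strictly_incr phi -> forall j, (j <= phi j)%nat.
Proof. intros H j. induction j as [|j IH]; [lia|]. specialize (H j). lia. Qed.

Lemma strictly_incr_comp phi psi :
  strictly_incr phi -> strictly_incr psi -> strictly_incr (fun j => phi (psi j)).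
Proof. intros Hphi Hpsi j. apply strictly_incr_lt, Hpsi. exact Hphi. Qed.

Lemma inv_INR_S_lt eps : eps > 0 -> exists N, forall j, (N <= j)%nat -> / INR (S j) < eps.
Proof.
  intros Heps. destruct (archimed_cor1 eps Heps) as [N [HN HN0]]. exists N. intros j Hj.
  eapply Rle_lt_trans; [|exact HN].
  apply Rinv_le_contravar; [apply lt_0_INR; lia | apply le_INR; lia].
Qed.

Lemma cluster_point_subseq (u : nat -> R) l :
  (forall N eps, eps > 0 -> exists p, (N <= p)%nat /\ Rabs (u p - l) < eps) ->
  exists phi, strictly_incr phi /\ Un_cv (fun j => u (phi j)) l.
Proof.
  intros H.
  destruct (choice (fun (Nj : nat * nat) p =>
                      (fst Nj <= p)%nat /\ Rabs (u p - l) < / INR (S (snd Nj)))) as [f Hf].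
  { intros [N j]. apply H, Rinv_0_lt_compat, lt_0_INR. lia. }
  (* the [j]-th index is chosen after the previous one, within [1/(j+1)] of [l] *)
  set (phi := fix phi j := match j with O => f (0, 0)%nat | S j' => f (S (phi j'), S j') end).
  assert (Hphi : forall j, Rabs (u (phi j) - l) < / INR (S j))
    by (intros [|j]; apply (Hf (_, _))).
  exists phi. split.
  - intro j. apply (Hf (S (phi j), S j)).
  - intros eps Heps. destruct (inv_INR_S_lt eps Heps) as [N HN]. exists N. intros j Hj.
    specialize (HN j Hj). specialize (Hphi j). unfold R_dist. lra.
Qed.

Lemma bolzano_weierstrass_R (u : nat -> R) M : (forall j, Rabs (u j) <= M) ->
  exists phi l, strictly_incr phi /\ Un_cv (fun j => u (phi j)) l.
Proof.
  intros HM.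
  destruct (Bolzano_Weierstrass u (fun c => - M <= c <= M) (compact_P3 _ _)) as [l Hl].
  { intro j. specialize (HM j). unfold Rabs in HM. destruct (Rcase_abs (u j)); lra. }
  destruct (cluster_point_subseq u l) as [phi Hphi]; [|now exists phi, l].
  intros N eps Heps.
  destruct (Hl (disc l (mkposreal eps Heps)) N) as [p Hp]; [|now exists p].
  now exists (mkposreal eps Heps).
Qed.

Definition vec_cv {n} (x : nat -> vec n) (y : vec n) : Prop :=
  forall eps, eps > 0 -> exists N, forall j, (N <= j)%nat -> rn_dist (x j) y < eps.

Lemma dot_cons n (x y : vec (S n)) :
  dot x y = x Fin.F1 * y Fin.F1 + dot (fun i => x (Fin.FS i)) (fun i => y (Fin.FS i)).
Proof. reflexivity. Qed.

Lemma vnorm_tail_le n (x : vec (S n)) : vnorm (fun i => x (Fin.FS i)) <= vnorm x.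
Proof.
  apply sqrt_le_1_alt. rewrite (dot_cons _ x x). pose proof (Rle_0_sqr (x Fin.F1)).
  unfold Rsqr in *. lra.
Qed.

Lemma vnorm_cons_le n (x : vec (S n)) :
  vnorm x <= Rabs (x Fin.F1) + vnorm (fun i => x (Fin.FS i)).
Proof.
  pose proof (Rabs_pos (x Fin.F1)). pose proof (vnorm_nonneg _ (fun i => x (Fin.FS i))).
  apply vnorm_le; [lra|].
  rewrite dot_cons, <- vnorm_sq.
  assert (Rabs (x Fin.F1) * Rabs (x Fin.F1) = x Fin.F1 * x Fin.F1)
    by (rewrite <- Rabs_mult; apply Rabs_right, Rle_ge, Rle_0_sqr).
  nra.
Qed.

Lemma bolzano_weierstrass n (x : nat -> vec n) M : (forall j, vnorm (x j) <= M) ->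
  exists phi y, strictly_incr phi /\ vec_cv (fun j => x (phi j)) y.
Proof.
  revert x. induction n as [|m IH]; intros x HM.
  - exists (fun j => j), (x 0%nat). split; [intro; lia|]. intros eps Heps. exists 0%nat. intros j _.
    unfold rn_dist, vnorm, dot. simpl. rewrite sqrt_0. exact Heps.
  - destruct (bolzano_weierstrass_R (fun j => x j Fin.F1) M) as [phi1 [l [Hphi1 Hl]]].
    { intro j. eapply Rle_trans; [apply Rabs_coord_le_vnorm | apply HM]. }
    destruct (IH (fun j i => x (phi1 j) (Fin.FS i))) as [phi2 [y [Hphi2 Hy]]].
    { intro j. eapply Rle_trans; [apply vnorm_tail_le | apply HM]. }
    exists (fun j => phi1 (phi2 j)), (fun k => Fin.caseS' k (fun _ => R) l y). split.
    + now apply strictly_incr_comp.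
    + intros eps Heps.
      destruct (Hl (eps / 2)) as [N1 HN1]; [lra|].
      destruct (Hy (eps / 2)) as [N2 HN2]; [lra|].
      exists (max N1 N2). intros j Hj.
      pose proof (strictly_incr_ge phi2 Hphi2 j).
      specialize (HN1 (phi2 j) ltac:(lia)). specialize (HN2 j ltac:(lia)).
      unfold R_dist in HN1. unfold rn_dist in *.
      set (d := vsub (x (phi1 (phi2 j))) (fun k => Fin.caseS' k (fun _ => R) l y)).
      pose proof (vnorm_cons_le _ d) as Hd.
      change (d Fin.F1) with (x (phi1 (phi2 j)) Fin.F1 - l) in Hd.
      change (fun i => d (Fin.FS i))
        with (vsub (fun i => x (phi1 (phi2 j)) (Fin.FS i)) y) in Hd.
      lra.
Qed.

Section LscMin.
Variables (n : nat) (K : vec n -> Prop) (G : vec n -> R).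
Hypothesis K_bounded : rn_bounded K.
Hypothesis K_closed : forall y, rn_closure K y -> K y.
Hypothesis G_lsc : lsc_on K G.

Lemma lsc_cluster_value (xs : nat -> vec n) : (forall j, K (xs j)) ->
  exists y, K y /\ forall c,
    (forall eps, eps > 0 -> exists N, forall j, (N <= j)%nat -> G (xs j) < c + eps) -> G y <= c.
Proof.
  intros HK. destruct K_bounded as [M HM].
  destruct (bolzano_weierstrass n xs M (fun j => HM _ (HK j))) as [phi [y [Hphi Hy]]].
  assert (Ky : K y).
  { apply K_closed. intros eps Heps. destruct (Hy eps Heps) as [N HN].
    exists (xs (phi N)). split; auto. }
  exists y. split; [exact Ky|]. intros c Hc.
  apply Rnot_lt_le. intro Hlt.
  destruct (G_lsc y Ky ((G y - c) / 2)) as [delta [Hdelta Hnear]]; [lra|].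
  destruct (Hy delta Hdelta) as [N1 HN1].
  destruct (Hc ((G y - c) / 2)) as [N2 HN2]; [lra|].
  set (j := max N1 N2).
  pose proof (strictly_incr_ge phi Hphi j).
  specialize (Hnear (xs (phi j)) (HK _) (HN1 j ltac:(lia))).
  specialize (HN2 (phi j) ltac:(lia)). lra.
Qed.

Lemma lsc_attains_min : (exists x, K x) -> exists x, K x /\ forall y, K y -> G x <= G y.
Proof.
  intros [x0 Kx0].
  destruct (classic (exists L, forall x, K x -> L <= G x)) as [[L HL]|Hunb].
  - destruct (completeness (fun r => exists x, K x /\ r = - G x)) as [s [Hub Hlub]].
    { exists (- L). intros r [x [Kx ->]]. specialize (HL x Kx). lra. }
    { now exists (- G x0), x0. }
    assert (Hnear : forall j, exists x, K x /\ G x < - s + / INR (S j)).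
    { intro j. apply NNPP. intro Hno.
      assert (s <= s - / INR (S j)).
      { apply Hlub. intros r [x [Kx ->]]. apply Rnot_lt_le. intro.
        apply Hno. exists x. split; [exact Kx | lra]. }
      assert (0 < / INR (S j)) by (apply Rinv_0_lt_compat, lt_0_INR; lia). lra. }
    destruct (choice _ Hnear) as [xs Hxs].
    destruct (lsc_cluster_value xs (fun j => proj1 (Hxs j))) as [y [Ky Hy]].
    exists y. split; [exact Ky|]. intros z Kz.
    assert (- G z <= s) by (apply Hub; now exists z).
    enough (G y <= - s) by lra.
    apply Hy. intros eps Heps. destruct (inv_INR_S_lt eps Heps) as [N HN].
    exists N. intros j Hj. specialize (HN j Hj). specialize (Hxs j). lra.
  - assert (Hlow : forall j, exists x, K x /\ G x < - INR j).
    { intro j. apply NNPP. intro Hno. apply Hunb. exists (- INR j). intros x Kx.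
      apply Rnot_lt_le. intro. apply Hno. now exists x. }
    destruct (choice _ Hlow) as [xs Hxs].
    destruct (lsc_cluster_value xs (fun j => proj1 (Hxs j))) as [y [Ky Hy]].
    enough (G y <= G y - 1) by lra.
    apply Hy. intros eps Heps. destruct (INR_unbounded (1 - G y)) as [N HN].
    exists N. intros j Hj. apply le_INR in Hj. specialize (Hxs j). lra.
Qed.

End LscMin.

Definition sqdist {n} (x y : vec n) : R := dot (vsub x y) (vsub x y).

Lemma rn_dist_sq n (x y : vec n) : rn_dist x y * rn_dist x y = sqdist x y.
Proof. apply vnorm_sq. Qed.

Lemma sqdist_expand n (c x y : vec n) :
  sqdist y c = sqdist x c + 2 * dot (vsub x c) (vsub y x) + sqdist y x.
Proof.
  unfold sqdist.
  rewrite (dot_ext _ _ (fun k => 1 * vsub x c k + 1 * vsub y x k) _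
                       (fun k => 1 * vsub x c k + 1 * vsub y x k)) by (intro; unfold vsub; ring).
  rewrite dot_expand. ring.
Qed.

Lemma dot_zero_l n (h : vec n) : dot (fun _ => 0) h = 0.
Proof.
  unfold dot. rewrite fsum_scal. ring.
Qed.

Definition rn_continuous_at {n} (f : vec n -> R) (x : vec n) : Prop :=
  forall eps, eps > 0 -> exists delta, delta > 0 /\
    forall y, rn_dist y x < delta -> Rabs (f y - f x) < eps.

Lemma continuous_on_of_at n (Om : vec n -> Prop) (f : vec n -> R) :
  (forall x, rn_continuous_at f x) -> continuous_on Om f.
Proof.
  intros H x _ eps Heps. destruct (H x eps Heps) as [delta [Hdelta Hy]].
  exists delta. split; auto.
Qed.

Section Gradients.
Variable n : nat.
Implicit Types (f g : vec n -> R) (a b x : vec n).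

Lemma has_grad_ext f a b x : (forall k, a k = b k) -> has_grad f a x -> has_grad f b x.
Proof.
  intros Hab H eps Heps. destruct (H eps Heps) as [delta [Hdelta Hy]].
  exists delta. split; [exact Hdelta|]. intros y Hyx.
  rewrite <- (dot_ext _ a b (vsub y x) (vsub y x) Hab (fun _ => eq_refl)). auto.
Qed.

Lemma has_grad_const (c : R) x : has_grad (fun _ => c) (fun _ => 0) x.
Proof.
  intros eps Heps. exists 1. split; [lra|]. intros y _.
  rewrite dot_zero_l. replace (c - c - 0) with 0 by ring. rewrite Rabs_R0.
  apply Rmult_le_pos; [lra | apply vnorm_nonneg].
Qed.

Lemma has_grad_coord (k : Fin.t n) x : has_grad (fun y => y k) (kron k) x.
Proof.
  intros eps Heps. exists 1. split; [lra|]. intros y _.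
  rewrite dot_kron_l. unfold vsub. replace (_ - _ - _) with 0 by ring. rewrite Rabs_R0.
  apply Rmult_le_pos; [lra | apply vnorm_nonneg].
Qed.

Lemma has_grad_sqdist (c x : vec n) :
  has_grad (fun y => sqdist y c) (fun k => 2 * (x k - c k)) x.
Proof.
  intros eps Heps. exists eps. split; [exact Heps|]. intros y Hy.
  change (dot (fun k => 2 * (x k - c k)) (vsub y x))
    with (dot (fun k => 2 * vsub x c k) (vsub y x)).
  rewrite dot_scal_l, (sqdist_expand _ c x y), <- (rn_dist_sq _ y x).
  pose proof (vnorm_nonneg _ (vsub y x)). fold (rn_dist y x) in *.
  replace (_ + _ + _ - _ - _) with (rn_dist y x * rn_dist y x) by ring.
  rewrite Rabs_right by (apply Rle_ge, Rle_0_sqr). nra.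
Qed.

Lemma has_grad_plus f g a b x :
  has_grad f a x -> has_grad g b x -> has_grad (fun y => f y + g y) (fun k => a k + b k) x.
Proof.
  intros Hf Hg eps Heps.
  destruct (Hf (eps / 2)) as [d1 [Hd1 Hf1]]; [lra|].
  destruct (Hg (eps / 2)) as [d2 [Hd2 Hg2]]; [lra|].
  exists (Rmin d1 d2). split; [now apply Rmin_pos|]. intros y Hy.
  apply Rmin_Rgt_l in Hy as [Hy1 Hy2].
  specialize (Hf1 y Hy1). specialize (Hg2 y Hy2).
  rewrite dot_plus_l.
  replace (_ - _ - _) with ((f y - f x - dot a (vsub y x)) + (g y - g x - dot b (vsub y x)))
    by ring.
  eapply Rle_trans; [apply Rabs_triang | lra].
Qed.

Lemma has_grad_lipschitz f a x : has_grad f a x ->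
  exists delta, delta > 0 /\ forall y, rn_dist y x < delta ->
    Rabs (f y - f x) <= (vnorm a + 1) * rn_dist y x.
Proof.
  intros H. destruct (H 1) as [delta [Hdelta Hy]]; [lra|].
  exists delta. split; [exact Hdelta|]. intros y Hyx. specialize (Hy y Hyx).
  pose proof (Cauchy_Schwarz _ a (vsub y x)). fold (rn_dist y x) in *.
  replace (f y - f x) with ((f y - f x - dot a (vsub y x)) + dot a (vsub y x)) by ring.
  eapply Rle_trans; [apply Rabs_triang | lra].
Qed.

Lemma has_grad_continuous f a x : has_grad f a x -> rn_continuous_at f x.
Proof.
  intros H eps Heps. destruct (has_grad_lipschitz f a x H) as [delta [Hdelta Hy]].
  set (K := vnorm a + 1). assert (HK : K > 0) by (pose proof (vnorm_nonneg _ a); unfold K; lra).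
  exists (Rmin delta (eps / K)). split; [apply Rmin_pos; [lra | apply Rdiv_lt_0_compat; lra]|].
  intros y Hyx. apply Rmin_Rgt_l in Hyx as [Hy1 Hy2].
  specialize (Hy y Hy1). fold K in Hy.
  assert (K * rn_dist y x < K * (eps / K)) by (apply Rmult_lt_compat_l; lra).
  replace (K * (eps / K)) with eps in * by (field; lra). lra.
Qed.

Lemma has_grad_mult f g a b x :
  has_grad f a x -> has_grad g b x ->
  has_grad (fun y => f y * g y) (fun k => f x * b k + g x * a k) x.
Proof.
  intros Hf Hg eps Heps.
  destruct (has_grad_lipschitz f a x Hf) as [d0 [Hd0 Hlip]].
  set (K := vnorm a + 1). pose proof (vnorm_nonneg _ a).
  set (c := Rabs (f x) + Rabs (g x) + K + 1).
  assert (Hc : c > 0)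
    by (pose proof (Rabs_pos (f x)); pose proof (Rabs_pos (g x)); unfold c, K; lra).
  set (e := eps / c). assert (He : e > 0) by (apply Rdiv_lt_0_compat; lra).
  destruct (Hf e He) as [d1 [Hd1 Hf1]].
  destruct (Hg e He) as [d2 [Hd2 Hg2]].
  destruct (has_grad_continuous g b x Hg e He) as [d3 [Hd3 Hg3]].
  exists (Rmin (Rmin d0 d1) (Rmin d2 d3)).
  split; [repeat apply Rmin_pos; assumption|]. intros y Hy.
  apply Rmin_Rgt_l in Hy as [Hy01 Hy23].
  apply Rmin_Rgt_l in Hy01 as [Hy0 Hy1]. apply Rmin_Rgt_l in Hy23 as [Hy2 Hy3].
  specialize (Hlip y Hy0). specialize (Hf1 y Hy1). specialize (Hg2 y Hy2). specialize (Hg3 y Hy3).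
  fold K in Hlip. set (rho := rn_dist y x) in *.
  assert (Hrho : 0 <= rho) by apply vnorm_nonneg.
  rewrite dot_plus_l, !dot_scal_l.
  replace (_ - _ - _) with (f x * (g y - g x - dot b (vsub y x))
                            + g x * (f y - f x - dot a (vsub y x))
                            + (f y - f x) * (g y - g x)) by ring.
  eapply Rle_trans; [apply Rabs_triang|].
  eapply Rle_trans; [apply Rplus_le_compat_r, Rabs_triang|].
  rewrite !Rabs_mult.
  assert (Rabs (f x) * Rabs (g y - g x - dot b (vsub y x)) <= Rabs (f x) * (e * rho))
    by (apply Rmult_le_compat_l; [apply Rabs_pos | exact Hg2]).
  assert (Rabs (g x) * Rabs (f y - f x - dot a (vsub y x)) <= Rabs (g x) * (e * rho))
    by (apply Rmult_le_compat_l; [apply Rabs_pos | exact Hf1]).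
  assert (Rabs (f y - f x) * Rabs (g y - g x) <= (K * rho) * e)
    by (apply Rmult_le_compat; try apply Rabs_pos; lra).
  assert (Hce : c * e = eps) by (unfold e; field; lra).
  unfold c in Hce. nra.
Qed.

End Gradients.

Definition barrier {n} (A B C : R) (xbar x : vec n) : R :=
  A + B * ((sqdist x xbar - C) * (sqdist x xbar - C)).

Definition barrier_grad {n} (B C : R) (xbar x : vec n) : vec n :=
  fun k => 4 * B * (sqdist x xbar - C) * (x k - xbar k).

Definition barrier_hess {n} (B C : R) (xbar x : vec n) : Fin.t n -> Fin.t n -> R :=
  fun k l => 8 * B * (x k - xbar k) * (x l - xbar l) + 4 * B * (sqdist x xbar - C) * kron k l.

Section Barrier.
Variables (n : nat) (A B C : R) (xbar : vec n).

Lemma has_grad_sqdist_sub (x : vec n) :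
  has_grad (fun y => sqdist y xbar - C) (fun k => 2 * (x k - xbar k) + 0) x.
Proof. exact (has_grad_plus _ _ _ _ _ _ (has_grad_sqdist _ xbar x) (has_grad_const _ (- C) x)). Qed.

Lemma has_grad_barrier (x : vec n) : has_grad (barrier A B C xbar) (barrier_grad B C xbar x) x.
Proof.
  pose proof (has_grad_sqdist_sub x) as HT.
  eapply has_grad_ext; [|exact (has_grad_plus _ _ _ _ _ _ (has_grad_const _ A x)
                              (has_grad_mult _ _ _ _ _ _ (has_grad_const _ B x)
                                 (has_grad_mult _ _ _ _ _ _ HT HT)))].
  intro k. unfold barrier_grad. ring.
Qed.

Lemma has_grad_barrier_grad (x : vec n) k :
  has_grad (fun y => barrier_grad B C xbar y k) (barrier_hess B C xbar x k) x.
Proof.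
  eapply has_grad_ext;
    [|exact (has_grad_mult _ _ _ _ _ _
               (has_grad_mult _ _ _ _ _ _ (has_grad_const _ (4 * B) x) (has_grad_sqdist_sub x))
               (has_grad_plus _ _ _ _ _ _ (has_grad_coord _ k x) (has_grad_const _ (- xbar k) x)))].
  intro l. unfold barrier_hess. ring.
Qed.

Lemma barrier_hess_continuous (x : vec n) k l :
  rn_continuous_at (fun y => barrier_hess B C xbar y k l) x.
Proof.
  eapply has_grad_continuous.
  exact (has_grad_plus _ _ _ _ _ _
           (has_grad_mult _ _ _ _ _ _
              (has_grad_mult _ _ _ _ _ _ (has_grad_const _ (8 * B) x)
                 (has_grad_plus _ _ _ _ _ _ (has_grad_coord _ k x) (has_grad_const _ (- xbar k) x)))
              (has_grad_plus _ _ _ _ _ _ (has_grad_coord _ l x) (has_grad_const _ (- xbar l) x)))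
           (has_grad_mult _ _ _ _ _ _
              (has_grad_mult _ _ _ _ _ _ (has_grad_const _ (4 * B) x) (has_grad_sqdist_sub x))
              (has_grad_const _ (kron k l) x))).
Qed.

Lemma barrier_C2 (Om : vec n -> Prop) :
  C2_on Om (barrier A B C xbar) (barrier_grad B C xbar) (barrier_hess B C xbar).
Proof.
  split; [|split].
  - intros x _. apply has_grad_barrier.
  - intros x k _. apply has_grad_barrier_grad.
  - intros k l. apply continuous_on_of_at. intro x. apply barrier_hess_continuous.
Qed.

End Barrier.

Lemma barrier_lap_inf_minus n (B C : R) (xbar x : vec n) :
  B <> 0 -> sqdist x xbar <> C -> 0 < sqdist x xbar ->
  lap_inf_minus (barrier_grad B C xbar x) (barrier_hess B C xbar x)
                (4 * B * (3 * sqdist x xbar - C)).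
Proof.
  intros HB HC HT.
  set (T := sqdist x xbar) in *. set (c := 4 * B * (T - C)). set (d := vsub x xbar).
  assert (Hc : c <> 0) by (unfold c; intro H; apply Rmult_integral in H; lra).
  assert (Hdd : dot d d = T) by reflexivity.
  assert (Hpp : dot (barrier_grad B C xbar x) (barrier_grad B C xbar x) = c * c * T).
  { change (barrier_grad B C xbar x) with (fun k => c * d k).
    rewrite dot_scal_l, dot_comm, dot_scal_l, Hdd. ring. }
  assert (Hcc : c * c > 0) by (apply Rsqr_pos_lt; auto).
  left. split.
  - intro Hz. rewrite Hz, dot_zero_l in Hpp. nra.
  - rewrite (fsum_ext _ _ (fun k => (8 * B * T + 4 * B * (T - C)) * c * c * (d k * d k))).
    + rewrite fsum_scal. change (fsum n (fun k => d k * d k)) with (dot d d).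
      assert (Hn2 : vnorm (barrier_grad B C xbar x) ^ 2 = c * c * T)
        by (rewrite <- Hpp, <- vnorm_sq; ring).
      rewrite Hdd, Hn2. field. split; lra.
    + intro k. unfold barrier_hess. fold T.
      rewrite (fsum_ext _ _ (fun l => (8 * B * c * c * d k * d k) * (d l * d l)
                                      + (4 * B * (T - C) * c * c * d k) * (kron k l * d l)))
        by (intro l; unfold barrier_grad, d, vsub; fold T c; ring).
      rewrite fsum_plus, !fsum_scal, fsum_kron.
      change (fsum n (fun l => d l * d l)) with (dot d d). rewrite Hdd. ring.
Qed.

Lemma supersolution_min_touching n (U : vec n -> Prop) (u1 u2 phi : vec n -> R) Dphi D2phi x m :
  viscosity_supersolution U u1 u2 -> C2_on U phi Dphi D2phi -> U x ->
  local_min_at U (fun y => Rmin (u1 y) (u2 y) - phi y) x ->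
  lap_inf_minus (Dphi x) (D2phi x) m -> m <= 0.
Proof.
  intros [_ [_ [Hs1 Hs2]]] Hphi Ux [r [Hr Hloc]] Hm.
  destruct (Rle_dec (u1 x) (u2 x)) as [H12|H21].
  - assert (Hmin1 : local_min_at U (fun y => u1 y - phi y) x).
    { exists r. split; [exact Hr|]. intros y Uy Hy. specialize (Hloc y Uy Hy). cbv beta in *.
      rewrite Rmin_left in Hloc by exact H12. pose proof (Rmin_l (u1 y) (u2 y)). lra. }
    pose proof (Hs1 phi Dphi D2phi x Hphi Ux Hmin1 m Hm). lra.
  - assert (Hmin2 : local_min_at U (fun y => u2 y - phi y) x).
    { exists r. split; [exact Hr|]. intros y Uy Hy. specialize (Hloc y Uy Hy). cbv beta in *.
      rewrite Rmin_right in Hloc by lra. pose proof (Rmin_r (u1 y) (u2 y)). lra. }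
    pose proof (Hs2 phi Dphi D2phi x Hphi Ux Hmin2 m Hm). lra.
Qed.

Lemma lsc_on_subset n (U K : vec n -> Prop) (f : vec n -> R) :
  (forall x, K x -> U x) -> lsc_on U f -> lsc_on K f.
Proof.
  intros HKU Hf x Kx eps Heps. destruct (Hf x (HKU x Kx) eps Heps) as [delta [Hdelta Hy]].
  exists delta. split; auto.
Qed.

Lemma lsc_on_Rmin n (K : vec n -> Prop) (f g : vec n -> R) :
  lsc_on K f -> lsc_on K g -> lsc_on K (fun x => Rmin (f x) (g x)).
Proof.
  intros Hf Hg x Kx eps Heps.
  destruct (Hf x Kx eps Heps) as [d1 [Hd1 Hy1]]. destruct (Hg x Kx eps Heps) as [d2 [Hd2 Hy2]].
  exists (Rmin d1 d2). split; [now apply Rmin_pos|]. intros y Ky Hy.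
  apply Rmin_Rgt_l in Hy as [Hyd1 Hyd2].
  specialize (Hy1 y Ky Hyd1). specialize (Hy2 y Ky Hyd2).
  unfold Rmin. destruct (Rle_dec (f y) (g y)), (Rle_dec (f x) (g x)); lra.
Qed.

Lemma lsc_on_minus_continuous n (K : vec n -> Prop) (f g : vec n -> R) :
  lsc_on K f -> (forall x, rn_continuous_at g x) -> lsc_on K (fun x => f x - g x).
Proof.
  intros Hf Hg x Kx eps Heps.
  destruct (Hf x Kx (eps / 2)) as [d1 [Hd1 Hy1]]; [lra|].
  destruct (Hg x (eps / 2)) as [d2 [Hd2 Hy2]]; [lra|].
  exists (Rmin d1 d2). split; [now apply Rmin_pos|]. intros y Ky Hy.
  apply Rmin_Rgt_l in Hy as [Hyd1 Hyd2].
  specialize (Hy1 y Ky Hyd1). specialize (Hy2 y Hyd2). apply Rabs_def2 in Hy2. lra.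
Qed.

Definition annulus {n} (xbar : vec n) (a b : R) (x : vec n) : Prop := a <= sqdist x xbar <= b.

Lemma annulus_bounded n (xbar : vec n) a b : rn_bounded (annulus xbar a b).
Proof.
  exists (vnorm xbar + b + 1). intros x [_ Hb].
  pose proof (vnorm_nonneg _ (vsub x xbar)) as Hd.
  assert (Hdb : vnorm (vsub x xbar) * vnorm (vsub x xbar) <= b) by (rewrite vnorm_sq; exact Hb).
  pose proof (vnorm_triang _ (vsub x xbar) xbar) as Htri.
  rewrite (vnorm_ext _ _ x) in Htri by (intro; unfold vsub; ring).
  nra.
Qed.

Lemma annulus_closed n (xbar : vec n) a b y :
  rn_closure (annulus xbar a b) y -> annulus xbar a b y.
Proof.
  intros Hy.
  assert (Hnear : forall eps, eps > 0 ->
            exists z, annulus xbar a b z /\ Rabs (sqdist z xbar - sqdist y xbar) < eps).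
  { intros eps Heps.
    destruct (has_grad_continuous _ _ _ _ (has_grad_sqdist _ xbar y) eps Heps) as [d [Hd Hz]].
    destruct (Hy d Hd) as [z [Hz_ann Hzd]]. exists z. split; auto. }
  split; apply Rnot_lt_le; intro Hlt.
  - destruct (Hnear (a - sqdist y xbar)) as [z [[Ha _] Hz]]; [lra|].
    apply Rabs_def2 in Hz. lra.
  - destruct (Hnear (sqdist y xbar - b)) as [z [[_ Hb] Hz]]; [lra|].
    apply Rabs_def2 in Hz. lra.
Qed.

Lemma barrier_le_min_on_annulus n (U : vec n -> Prop) (u1 u2 : vec n -> R) (xbar : vec n)
  a b A B C :
  viscosity_supersolution U u1 u2 -> (forall x, annulus xbar a b x -> U x) ->
  0 < a -> b < C < 3 * a -> B > 0 ->
  (forall x, annulus xbar a b x -> sqdist x xbar = a \/ sqdist x xbar = b ->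
     barrier A B C xbar x <= Rmin (u1 x) (u2 x)) ->
  forall x, annulus xbar a b x -> barrier A B C xbar x <= Rmin (u1 x) (u2 x).
Proof.
  intros Hsup HU Ha HC HB Hbd x Hx.
  set (G := fun y => Rmin (u1 y) (u2 y) - barrier A B C xbar y).
  assert (HG : lsc_on (annulus xbar a b) G).
  { destruct Hsup as [Hl1 [Hl2 _]].
    apply lsc_on_minus_continuous; [|intro; eapply has_grad_continuous, has_grad_barrier].
    apply lsc_on_Rmin; eapply lsc_on_subset; eassumption. }
  destruct (lsc_attains_min n _ G (annulus_bounded n xbar a b) (annulus_closed n xbar a b) HG)
    as [xh [Hxh Hmin]]; [now exists x|].
  enough (0 <= G xh) by (specialize (Hmin x Hx); unfold G in *; lra).
  apply Rnot_lt_le. intro Hneg.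
  set (T := sqdist xh xbar).
  assert (Hint : a < T < b).
  { assert (Hoff : ~ (T = a \/ T = b))
      by (intro E; specialize (Hbd xh Hxh E); unfold G in Hneg; lra).
    destruct Hxh. unfold T in *. split; apply Rnot_le_lt; intro; apply Hoff; [left | right]; lra. }
  (* an interior minimum of [min(u1,u2) - barrier] would violate the supersolution property *)
  assert (Hloc : local_min_at U G xh).
  { destruct (has_grad_continuous _ _ _ _ (has_grad_sqdist _ xbar xh) (Rmin (T - a) (b - T)))
      as [r [Hr Hnear]]; [apply Rmin_pos; lra|].
    exists r. split; [exact Hr|]. intros y _ Hy. apply Hmin.
    specialize (Hnear y Hy). apply Rabs_def2 in Hnear.
    pose proof (Rmin_l (T - a) (b - T)). pose proof (Rmin_r (T - a) (b - T)).
    unfold annulus, T in *. lra. }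
  assert (Hlap := barrier_lap_inf_minus n B C xbar xh ltac:(lra)
                    ltac:(fold T; lra) ltac:(fold T; lra)).
  pose proof (supersolution_min_touching n U u1 u2 _ _ _ xh _ Hsup (barrier_C2 n A B C xbar U)
                (HU xh Hxh) Hloc Hlap) as Hnonpos.
  fold T in Hnonpos. nra.
Qed.

Lemma vnorm_scal n c (x : vec n) : vnorm (fun k => c * x k) = Rabs c * vnorm x.
Proof.
  unfold vnorm. rewrite dot_scal_l, dot_comm, dot_scal_l, <- Rmult_assoc.
  rewrite sqrt_mult_alt by apply Rle_0_sqr. now rewrite <- (sqrt_Rsqr_abs c).
Qed.

Lemma closed_ball_in_closure n (xbar y : vec n) Rad :
  Rad > 0 -> sqdist y xbar <= Rad * Rad -> rn_closure (rn_open_ball xbar Rad) y.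
Proof.
  intros HRad Hy eps Heps.
  assert (Hd : rn_dist y xbar <= Rad) by (apply vnorm_le; [lra | exact Hy]).
  pose proof (vnorm_nonneg _ (vsub y xbar)) as Hd0. fold (rn_dist y xbar) in Hd0.
  set (t := eps / (eps + Rad)).
  assert (Ht : 0 < t < 1).
  { unfold t. split; [apply Rdiv_lt_0_compat; lra|].
    apply (Rmult_lt_reg_r (eps + Rad)); [lra|]. field_simplify; lra. }
  assert (HtR : t * Rad < eps).
  { unfold t. apply (Rmult_lt_reg_r (eps + Rad)); [lra|].
    replace (eps / (eps + Rad) * Rad * (eps + Rad)) with (eps * Rad) by (field; lra). nra. }
  exists (fun k => xbar k + (1 - t) * (y k - xbar k)). split.
  - unfold rn_open_ball, rn_dist.
    rewrite (vnorm_ext _ _ (fun k => (1 - t) * vsub y xbar k)) by (intro; unfold vsub; ring).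
    rewrite vnorm_scal, Rabs_right by lra. fold (rn_dist y xbar). nra.
  - unfold rn_dist.
    rewrite (vnorm_ext _ _ (fun k => (- t) * vsub y xbar k)) by (intro; unfold vsub; ring).
    rewrite vnorm_scal, Rabs_left by lra. fold (rn_dist y xbar). nra.
Qed.

Lemma rn_boundary_ball_dist n (xbar x : vec n) Rad :
  rn_boundary (rn_open_ball xbar Rad) x -> rn_dist x xbar = Rad.
Proof.
  intros [Hcl Hout]. unfold rn_open_ball in Hout.
  apply Rle_antisym; [|lra]. apply Rnot_lt_le. intro Hgt.
  destruct (Hcl (rn_dist x xbar - Rad)) as [y [Hy Hyx]]; [lra|].
  unfold rn_open_ball in Hy.
  pose proof (rn_dist_triang n x y xbar). rewrite (rn_dist_sym n x y) in *. lra.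
Qed.

Lemma sqdist_scale n (c x y : vec n) t :
  (forall k, y k - c k = t * (x k - c k)) -> sqdist y c = t * t * sqdist x c.
Proof.
  intros Hy. unfold sqdist.
  rewrite (dot_ext _ _ (fun k => t * vsub x c k) _ (fun k => t * vsub x c k))
    by (intro k; unfold vsub; apply Hy).
  rewrite dot_scal_l, dot_comm, dot_scal_l. ring.
Qed.

Lemma sqdist_along_normal n (x0 xbar : vec n) Rad s :
  Rad > 0 -> rn_dist x0 xbar = Rad ->
  sqdist (vsub x0 (vscale s (vscale (/ rn_dist x0 xbar) (vsub x0 xbar)))) xbar
  = (Rad - s) * (Rad - s).
Proof.
  intros HRad Hd.
  rewrite (sqdist_scale n xbar x0 _ (1 - s / Rad)).
  - rewrite <- rn_dist_sq, Hd. field. lra.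
  - intro k. unfold vsub, vscale. rewrite Hd. field. lra.
Qed.

Lemma barrier_below_near_sphere n (U : vec n -> Prop) (u1 u2 : vec n -> R) (xbar : vec n) Rad m :
  viscosity_supersolution U u1 u2 -> Rad > 0 ->
  (forall y, sqdist y xbar <= Rad * Rad -> U y) ->
  (forall y, U y -> m <= Rmin (u1 y) (u2 y)) ->
  (forall y, sqdist y xbar < Rad * Rad -> m < Rmin (u1 y) (u2 y)) ->
  exists eps, eps > 0 /\ forall y, annulus xbar (3 / 4 * (Rad * Rad)) (Rad * Rad) y ->
    barrier (m - eps * (Rad * Rad) * (Rad * Rad)) eps (2 * (Rad * Rad)) xbar y
    <= Rmin (u1 y) (u2 y).
Proof.
  intros Hsup HRad HU Hmin Hstrict.
  set (R2 := Rad * Rad) in *. assert (HR2 : R2 > 0) by (unfold R2; nra).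
  assert (Hball : forall y, annulus xbar 0 (3 / 4 * R2) y -> U y)
    by (intros y [_ Hy]; apply HU; lra).
  destruct (lsc_attains_min n (annulus xbar 0 (3 / 4 * R2)) (fun y => Rmin (u1 y) (u2 y))
              (annulus_bounded _ _ _ _) (annulus_closed _ _ _ _))
    as [z [Hz Hzmin]].
  { destruct Hsup as [Hl1 [Hl2 _]]. apply lsc_on_Rmin; eapply lsc_on_subset; eassumption. }
  { exists xbar. unfold annulus, sqdist.
    rewrite (dot_ext _ _ (fun _ => 0) _ (vsub xbar xbar)), dot_zero_l by (intro; unfold vsub; ring).
    lra. }
  set (delta := Rmin (u1 z) (u2 z) - m).
  assert (Hdelta : delta > 0)
    by (destruct Hz; unfold delta; specialize (Hstrict z ltac:(lra)); lra).
  (* makes the barrier equal to [m + delta] on the inner sphere and to [m] on the outer one *)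
  set (eps := delta / (9 / 16 * (R2 * R2))).
  assert (Heps : eps > 0) by (unfold eps; apply Rdiv_lt_0_compat; nra).
  assert (Hepsd : eps * (9 / 16 * (R2 * R2)) = delta) by (unfold eps; field; lra).
  exists eps. split; [exact Heps|].
  apply (barrier_le_min_on_annulus n U u1 u2 xbar);
    [exact Hsup | intros y [_ Hy]; exact (HU y Hy) | lra | lra | exact Heps |].
  intros y [Hya Hyb] [Ey|Ey]; unfold barrier; rewrite Ey.
  - assert (Hy : annulus xbar 0 (3 / 4 * R2) y) by (split; [apply dot_nonneg | lra]).
    specialize (Hzmin y Hy). unfold delta in *. nra.
  - specialize (Hmin y (HU y ltac:(lra))). nra.
Qed.

Lemma ray_increment Rad s : Rad > 0 -> 0 < s < Rad / 8 ->
  ((Rad - s) * (Rad - s) - 2 * (Rad * Rad)) * ((Rad - s) * (Rad - s) - 2 * (Rad * Rad))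
    - Rad * Rad * (Rad * Rad) >= 2 * (Rad * Rad * Rad) * s.
Proof.
  intros HRad Hs.
  replace (_ - _) with ((2 * Rad * s - s * s) * (2 * (Rad * Rad) + (2 * Rad * s - s * s))) by ring.
  assert (2 * Rad * s - s * s >= Rad * s) by nra.
  assert (Rad * s > 0) by nra.
  nra.
Qed.

Theorem mainTheorem1 (n : nat) (U V : vec n -> Prop) (u1 u2 : vec n -> R)
  (x0 xbar : vec n) (Rad : R) :
  rn_domain U -> rn_bounded U -> rn_is_open V ->
  (forall x, rn_closure V x -> U x) ->
  viscosity_supersolution U u1 u2 ->
  rn_boundary V x0 ->
  (forall x, U x -> u1 x0 <= u1 x /\ u1 x0 <= u2 x) ->
  (forall x, V x -> u1 x0 < u1 x /\ u1 x0 < u2 x) ->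
  Rad > 0 -> (forall y, rn_open_ball xbar Rad y -> V y) ->
  rn_boundary (rn_open_ball xbar Rad) x0 ->
  let nu := vscale (/ rn_dist x0 xbar) (vsub x0 xbar) in
  liminf_0plus_gt (fun s => (u1 (vsub x0 (vscale s nu)) - u1 x0) / s) 0.
Proof.
  intros _ _ _ HclU Hsup _ Hmin Hstrict HRad Hball Hx0 nu.
  pose proof (rn_boundary_ball_dist n xbar x0 Rad Hx0) as Hd0.
  destruct (barrier_below_near_sphere n U u1 u2 xbar Rad (u1 x0) Hsup HRad) as [eps [Heps Hbar]].
  - intros y Hy. apply HclU. intros e He.
    destruct (closed_ball_in_closure n xbar y Rad HRad Hy e He) as [z [Hz Hzy]].
    exists z. auto.
  - intros y Uy. destruct (Hmin y Uy). now apply Rmin_glb.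
  - intros y Hy. assert (Vy : V y) by (apply Hball, vnorm_lt; [lra | exact Hy]).
    destruct (Hstrict y Vy). now apply Rmin_glb_lt.
  - exists (2 * eps * (Rad * Rad * Rad)), (Rad / 8).
    split; [assert (Rad * Rad * Rad > 0) by (apply Rmult_lt_0_compat; nra); nra|].
    split; [lra|]. intros s Hs.
    pose proof (sqdist_along_normal n x0 xbar Rad s HRad Hd0) as Hy. fold nu in Hy.
    set (y := vsub x0 (vscale s nu)) in *.
    specialize (Hbar y ltac:(unfold annulus; rewrite Hy; nra)).
    unfold barrier in Hbar. rewrite Hy in Hbar.
    pose proof (Rmin_l (u1 y) (u2 y)). pose proof (ray_increment Rad s HRad Hs).
    apply (Rmult_le_reg_r s); [lra|].
    replace ((u1 y - u1 x0) / s * s) with (u1 y - u1 x0) by (field; lra). nra.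
Qed.
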